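(* Let $C = c_0c_1\dots c_{m-1}c_0$ and $D=(0)(1)\dots(n-1)(0)$ be reflexive digraph cycles with $D$ non-contractible. From any homomorphism $\phi \in \mathrm{Hom}(C,D)$ there is a path of up edges in $\mathrm{Hom}(C,D)$ to a monotone homomorphism.
   Context: A digraph is a binary relation $\to$ on a finite vertex set; reflexive means every vertex has a loop $uu$. A digraph cycle $C=c_0c_1\dots c_{m-1}c_0$ (indices mod $m$, $m\ge 3$) has underlying graph the cycle with edges $c_ic_{i+1}$; $D=(0)(1)\dots(n-1)(0)$ has vertex set the integers mod $n$. $D$ is non-contractible if it has length at least $4$ or is a directed $3$-cycle. A homomorphism $\phi: C\to D$ satisfies $u\to v\Rightarrow\phi(u)\to\phi(v)$. $\mathrm{Hom}(C,D)$ is the digraph on homomorphisms with $\phi\to\phi'$ iff $\phi(u)\to\phi'(v)$ for every arc $u\to v$ of $C$; adjacency means $\phi\to\phi'$ or $\phi'\to\phi$. For adjacent $\phi,\phi'$, a vertex $c$ moves up if $\phi'(c)=\phi(c)+1$, moves down if $\phi'(c)=\phi(c)-1$; $(\phi,\phi')$ is an up edge if they are adjacent and every vertex that moves, moves up; a path of up edges from $\phi$ to $\phi'$ is a sequence $\phi=\phi_0,\dots,\phi_k=\phi'$ of up edges $(\phi_j,\phi_{j+1})$. Under $\phi$, edge $c_ic_{i+1}$ is increasing, stationary or decreasing as $\phi(c_{i+1})-\phi(c_i)$ is $1,0,-1$ (mod $n$). A homomorphism is monotone if either every edge is increasing or stationary, or every edge is decreasing or stationary (in particular constant maps are monotone).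 *)

From mathcomp Require Import all_boot.
Set Implicit Arguments. Unset Strict Implicit. Unset Printing Implicit Defensive.

(* A digraph on vertex set 'I_k is a relation a : rel 'I_k (a u v means u -> v).
   Vertex i : 'I_k of a cycle stands for c_i; ordS i is c_{i+1} (indices mod k). *)

Definition refl_digraph_cycle (k : nat) (a : rel 'I_k) : Prop :=
  [/\ 3 <= k,
      (forall u, a u u),
      (forall i, a i (ordS i) || a (ordS i) i) &
      (forall u v, a u v -> [\/ u = v, v = ordS u | u = ordS v])].

Definition directed_3cycle (k : nat) (a : rel 'I_k) : Prop :=
  k = 3 /\
  ((forall i, a i (ordS i) && ~~ a (ordS i) i) \/
   (forall i, a (ordS i) i && ~~ a i (ordS i))).

Definition non_contractible (k : nat) (a : rel 'I_k) : Prop :=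
  4 <= k \/ directed_3cycle a.

Section Hom.
Variables (m n : nat) (C : rel 'I_m) (D : rel 'I_n).

Definition is_hom (phi : {ffun 'I_m -> 'I_n}) : Prop :=
  forall u v, C u v -> D (phi u) (phi v).

Definition hom_arc (phi phi' : {ffun 'I_m -> 'I_n}) : Prop :=
  forall u v, C u v -> D (phi u) (phi' v).

Definition hom_adjacent (phi phi' : {ffun 'I_m -> 'I_n}) : Prop :=
  hom_arc phi phi' \/ hom_arc phi' phi.

Definition up_edge (phi phi' : {ffun 'I_m -> 'I_n}) : Prop :=
  [/\ is_hom phi, is_hom phi', hom_adjacent phi phi' &
      forall c, phi' c != phi c -> phi' c = ordS (phi c)].

Fixpoint up_path (phi : {ffun 'I_m -> 'I_n}) (s : seq {ffun 'I_m -> 'I_n}) : Prop :=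
  match s with
  | [::] => True
  | psi :: s' => up_edge phi psi /\ up_path psi s'
  end.

Definition monotone (phi : {ffun 'I_m -> 'I_n}) : Prop :=
  (forall i, phi (ordS i) = phi i \/ phi (ordS i) = ordS (phi i)) \/
  (forall i, phi (ordS i) = phi i \/ phi (ordS i) = ord_pred (phi i)).

End Hom.

From mathcomp Require Import all_boot.

(* A non-monotone homomorphism has a decreasing and an increasing edge.
   Walking along C from a decreasing edge to the first increasing one, the
   stretch after the last decreasing edge is a plateau: a run of vertices mapped
   to some k whose two outer neighbours are mapped to k+1.  Raising the plateau
   to k+1 is again a homomorphism, adjacent to the old one in the direction of
   the arc between k and k+1 in D; it makes the edges at both ends of the run
   stationary and creates no new non-stationary edge.  Induction on the number
   of non-stationary edges finishes the proof. *)

Set Implicit Arguments.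
Unset Strict Implicit.
Unset Printing Implicit Defensive.

Section CyclicSuccessor.
Variable n : nat.

Lemma val_iter_ordS (a : 'I_n) k : val (iter k (@ordS n) a) = (a + k) %% n.
Proof.
elim: k => [|k IHk]; first by rewrite addn0 modn_small.
by rewrite iterS /= IHk -addn1 modnDml addn1 addnS.
Qed.

Lemma iter_ordS_id (a : 'I_n) k : (iter k (@ordS n) a == a) = (n %| k).
Proof.
have := @eqn_modDl a k 0 n.
by rewrite addn0 mod0n (modn_small (ltn_ord a)) -val_eqE val_iter_ordS => ->.
Qed.

Lemma ordS_neq (a : 'I_n) : 1 < n -> ordS a != a.
Proof.
move=> n_gt1; rewrite -[ordS a]/(iter 1 _ a) iter_ordS_id dvdn1.
by rewrite neq_ltn n_gt1 orbT.
Qed.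

Lemma ord_pred_neq (a : 'I_n) : 1 < n -> ord_pred a != a.
Proof.
move=> n_gt1; apply: contra_neq (ordS_neq a n_gt1) => pred_a.
by rewrite -{1}pred_a ord_predK.
Qed.

Lemma ordS_neq_ord_pred (a : 'I_n) : 2 < n -> ordS a != ord_pred a.
Proof.
move=> n_gt2; apply: contraTneq (n_gt2) => eq_S_pred.
have : iter 2 (@ordS n) a == a by rewrite /= eq_S_pred ord_predK.
by rewrite iter_ordS_id => /(@dvdn_leq _ 2 isT); rewrite leqNgt.
Qed.

Lemma iter_ordS_inj (a : 'I_n) u v :
  u < n -> v < n -> iter u (@ordS n) a = iter v (@ordS n) a -> u = v.
Proof.
move=> u_lt_n v_lt_n /(congr1 val); rewrite !val_iter_ordS => /eqP.
by rewrite eqn_modDl !modn_small // => /eqP.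
Qed.

Lemma iter_ordS_onto (a b : 'I_n) : exists2 u, u < n & iter u (@ordS n) a = b.
Proof.
have n_gt0 : 0 < n by apply: leq_ltn_trans (ltn_ord a).
exists ((b + (n - a)) %% n); first by rewrite ltn_pmod.
apply: val_inj; rewrite val_iter_ordS modnDmr addnCA subnKC; last first.
  exact: ltnW (ltn_ord a).
by rewrite modnDr modn_small.
Qed.

End CyclicSuccessor.

Section SequencePlateau.
Variables (n : nat) (f : nat -> 'I_n).
Hypothesis n_gt2 : 2 < n.
Hypothesis f_step :
  forall u, [\/ f u.+1 = f u, f u.+1 = ordS (f u) | f u.+1 = ord_pred (f u)].

Lemma seq_plateau t0 :
  f 1 = ord_pred (f 0) -> f t0.+1 = ordS (f t0) ->
  exists t' t k, [/\ t' < t <= t0, f t' = ordS k, f t.+1 = ordS k &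
                     forall u, t' < u <= t -> f u = k].
Proof.
move=> f_dec0 f_inc_t0.
have n_gt1 : 1 < n by apply: ltnW.
pose P t := f t.+1 == ordS (f t).
have [t /eqP f_inc_t t_min] := ex_minnP (ex_intro P t0 (introT eqP f_inc_t0)).
have t_gt0 : 0 < t.
  case: t f_inc_t {t_min} => // f_inc0.
  by have := ordS_neq_ord_pred (f 0) n_gt2; rewrite -f_inc0 f_dec0 eqxx.
pose Q u := (u < t) && (f u.+1 != f u).
have Q0 : Q 0 by rewrite /Q t_gt0 f_dec0 ord_pred_neq.
have Q_le_t u : Q u -> u <= t by case/andP=> /ltnW.
have [t' /andP[t'_lt_t f_moves_t'] t'_max] := ex_maxnP (ex_intro Q 0 Q0) Q_le_t.
have f_dec_t' : f t'.+1 = ord_pred (f t').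
  case: (f_step t') => [f_st|f_inc|//].
    by rewrite f_st eqxx in f_moves_t'.
  by have := t_min _ (introT eqP f_inc); rewrite leqNgt t'_lt_t.
have f_flat u : t' < u < t -> f u.+1 = f u.
  case/andP=> t'_lt_u u_lt_t; case: (f_step u) => [//|f_inc|f_dec].
  - by have := t_min _ (introT eqP f_inc); rewrite leqNgt u_lt_t.
  - have : Q u by rewrite /Q u_lt_t f_dec ord_pred_neq.
    by move/t'_max; rewrite leqNgt t'_lt_u.
have f_const u : t' < u <= t -> f u = f t'.+1.
  elim: u => [//|u IHu] /andP[t'_lt_Su Su_le_t].
  have [t'_lt_u|u_le_t'] := ltnP t' u; last first.
    by rewrite (_ : u = t') //; apply/eqP; rewrite eqn_leq u_le_t'.
  by rewrite f_flat ?t'_lt_u // IHu // t'_lt_u ltnW.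
exists t', t, (f t'.+1); split.
- by rewrite t'_lt_t (t_min _ (introT eqP f_inc_t0)).
- by rewrite f_dec_t' ord_predK.
- by rewrite f_inc_t f_const // t'_lt_t leqnn.
- exact: f_const.
Qed.

End SequencePlateau.

Definition nonstationary m n (phi : {ffun 'I_m -> 'I_n}) : {set 'I_m} :=
  [set i | phi (ordS i) != phi i].

Definition plateau m n (phi : {ffun 'I_m -> 'I_n}) (S : {set 'I_m}) (k : 'I_n)
    : Prop :=
  (forall c, c \in S -> phi c = k) /\
  (forall x y, x \in S -> y \notin S -> y = ordS x \/ x = ordS y ->
     phi y = ordS k).

Definition raise m n (S : {set 'I_m}) (phi : {ffun 'I_m -> 'I_n}) :=
  [ffun c => if c \in S then ordS (phi c) else phi c].

Section Raise.
Variables (m n : nat) (C : rel 'I_m) (D : rel 'I_n).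
Variables (phi : {ffun 'I_m -> 'I_n}) (S : {set 'I_m}) (k : 'I_n).
Hypothesis plateau_phi : plateau phi S k.
Let phi' := raise S phi.

Lemma raise_pair u v : [\/ u = v, v = ordS u | u = ordS v] ->
  [\/ phi' u = phi u /\ phi' v = phi v,
      [/\ phi u = k, phi v = k, phi' u = ordS k & phi' v = ordS k],
      [/\ phi u = k, phi v = ordS k, phi' u = ordS k & phi' v = ordS k] |
      [/\ phi u = ordS k, phi v = k, phi' u = ordS k & phi' v = ordS k]].
Proof.
case: plateau_phi => phi_S phi_border near_uv; rewrite !ffunE.
have [Su|Su] := boolP (u \in S); have [Sv|Sv] := boolP (v \in S).
- by constructor 2; rewrite !phi_S.
- have uv : v = ordS u \/ u = ordS v.
    by case: near_uv => [eq_uv|uv|vu]; [rewrite -eq_uv Su in Sv | left | right].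
  by constructor 3; rewrite (phi_S u) // (phi_border u v).
- have vu : u = ordS v \/ v = ordS u.
    by case: near_uv => [eq_uv|uv|vu]; [rewrite eq_uv Sv in Su | right | left].
  by constructor 4; rewrite (phi_S v) // (phi_border v u).
- by constructor 1.
Qed.

Lemma raise_nonstationary : 1 < n -> (exists c, c \notin S /\ ordS c \in S) ->
  #|nonstationary phi'| < #|nonstationary phi|.
Proof.
move=> n_gt1 [c [Sc SSc]]; apply: proper_card; apply/properP; split.
  apply/subsetP => i; rewrite !inE; apply: contraNN => /eqP phi_flat.
  by case: (raise_pair (Or32 _ _ (erefl (ordS i))))
    => [[-> ->]|[_ _ -> ->]|[_ _ -> ->]|[_ _ -> ->]]; rewrite ?phi_flat.
case: plateau_phi => phi_S phi_border.
have phi_c : phi c = ordS k by apply: (phi_border (ordS c)); last by right.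
exists c; rewrite !inE; first by rewrite phi_S // phi_c eq_sym ordS_neq.
by rewrite /phi' /raise !ffunE (negbTE Sc) SSc phi_S // phi_c eqxx.
Qed.

Hypothesis C_local : forall u v, C u v -> [\/ u = v, v = ordS u | u = ordS v].
Hypothesis D_refl : forall x, D x x.
Hypothesis phi_hom : is_hom C D phi.

Lemma raise_hom : is_hom C D phi'.
Proof.
move=> u v /[dup] /phi_hom Duv /C_local/raise_pair.
by case=> [[-> ->]|[_ _ -> ->]|[_ _ -> ->]|[_ _ -> ->]].
Qed.

Lemma raise_arc_up : D k (ordS k) -> hom_arc C D phi phi'.
Proof.
move=> Dk u v /[dup] /phi_hom Duv /C_local/raise_pair.
by case=> [[_ ->]|[-> _ _ ->]|[-> _ _ ->]|[-> _ _ ->]].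
Qed.

Lemma raise_arc_down : D (ordS k) k -> hom_arc C D phi' phi.
Proof.
move=> Dk u v /[dup] /phi_hom Duv /C_local/raise_pair.
by case=> [[-> _]|[_ -> -> _]|[_ -> -> _]|[_ -> -> _]].
Qed.

Lemma raise_up_edge : D k (ordS k) || D (ordS k) k -> up_edge C D phi phi'.
Proof.
move=> D_k; split; [exact: phi_hom | exact: raise_hom | |].
  by case/orP: D_k => [/raise_arc_up|/raise_arc_down]; [left|right].
by move=> c; rewrite ffunE; case: ifP; rewrite ?eqxx.
Qed.

End Raise.

Section HomPlateau.
Variables (m n : nat) (C : rel 'I_m) (D : rel 'I_n) (phi : {ffun 'I_m -> 'I_n}).

Lemma iter_ordS_plateau (a : 'I_m) t' t k : t' < t < m ->
  phi (iter t' (@ordS m) a) = ordS k -> phi (iter t.+1 (@ordS m) a) = ordS k ->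
  (forall u, t' < u <= t -> phi (iter u (@ordS m) a) = k) ->
  exists S, plateau phi S k /\ exists c, c \notin S /\ ordS c \in S.
Proof.
move=> /andP[t'_lt_t t_lt_m] phi_t' phi_St phi_mid.
pose w u := iter u (@ordS m) a.
pose S := [set c in map w (iota t'.+1 (t - t'))].
have inS c : reflect (exists2 u, t' < u <= t & c = w u) (c \in S).
  have iota_t'_t u : (u \in iota t'.+1 (t - t')) = (t' < u <= t).
    by rewrite mem_iota addSn subnKC ?(ltnW t'_lt_t).
  rewrite inE; apply: (iffP mapP) => -[u u_in ->];
  by exists u; rewrite ?iota_t'_t in u_in *.
exists S; split; [split|].
- by move=> c /inS[u u_in ->]; apply: phi_mid.
- move=> x y /inS[u /andP[t'_lt_u u_le_t] ->] Sy [y_def|].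
    rewrite y_def in Sy *; have [u_lt_t|t_le_u] := ltnP u t.
      by case/negP: Sy; apply/inS; exists u.+1; rewrite ?ltnS ?(ltnW t'_lt_u).
    by rewrite (_ : u = t) //; apply/eqP; rewrite eqn_leq u_le_t.
  case: u t'_lt_u u_le_t => // u t'_lt_Su Su_le_t /ordS_inj y_def.
  rewrite -y_def in Sy *.
  have [t'_lt_u|u_le_t'] := ltnP t' u.
    by case/negP: Sy; apply/inS; exists u; rewrite ?t'_lt_u ?(ltnW Su_le_t).
  by rewrite (_ : u = t') //; apply/eqP; rewrite eqn_leq u_le_t'.
- exists (w t'); split; last by apply/inS; exists t'.+1; rewrite ?ltnSn.
  apply/inS => -[u /andP[t'_lt_u u_le_t]].
  move/(iter_ordS_inj (ltn_trans t'_lt_t t_lt_m) (leq_ltn_trans u_le_t t_lt_m)).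
  by move=> eq_t'u; rewrite eq_t'u ltnn in t'_lt_u.
Qed.

Hypothesis C_edges : forall i, C i (ordS i) || C (ordS i) i.
Hypothesis D_local : forall x y, D x y -> [\/ x = y, y = ordS x | x = ordS y].
Hypothesis phi_hom : is_hom C D phi.

Lemma hom_edge_step i : [\/ phi (ordS i) = phi i, phi (ordS i) = ordS (phi i) |
                       phi (ordS i) = ord_pred (phi i)].
Proof.
case/orP: (C_edges i) => /phi_hom/D_local[->|->|->];
  by [constructor 1 | constructor 2 | constructor 3; rewrite ordSK].
Qed.

Lemma monotone_or_slopes : monotone phi \/
  (exists i, phi (ordS i) = ord_pred (phi i)) /\
  (exists j, phi (ordS j) = ordS (phi j)).
Proof.
have [i /eqP phi_dec|no_dec] :=
  pickP [pred i | phi (ordS i) == ord_pred (phi i)]; last first.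
  left; left=> k.
  case: (hom_edge_step k) => [st|inc|dec]; [by left|by right|].
  by have := no_dec k; rewrite /= dec eqxx.
have [j /eqP phi_inc|no_inc] :=
  pickP [pred j | phi (ordS j) == ordS (phi j)]; last first.
  left; right=> k.
  case: (hom_edge_step k) => [st|inc|dec]; [by left| |by right].
  by have := no_inc k; rewrite /= inc eqxx.
by right; split; [exists i | exists j].
Qed.

Hypothesis n_gt2 : 2 < n.

Lemma hom_plateau i j :
  phi (ordS i) = ord_pred (phi i) -> phi (ordS j) = ordS (phi j) ->
  exists S k, plateau phi S k /\ exists c, c \notin S /\ ordS c \in S.
Proof.
move=> phi_dec phi_inc; have [t0 t0_lt_m iter_t0] := iter_ordS_onto i j.
pose f u := phi (iter u (@ordS m) i).
have f_inc_t0 : f t0.+1 = ordS (f t0) by rewrite /f iterS iter_t0.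
have [t' [t [k [/andP[t'_lt_t t_le_t0] f_t' f_St f_mid]]]] :=
  seq_plateau (f := f) n_gt2 (fun u => hom_edge_step _) phi_dec f_inc_t0.
have t_lt_m : t' < t < m by rewrite t'_lt_t (leq_ltn_trans t_le_t0).
by have [S] := iter_ordS_plateau t_lt_m f_t' f_St f_mid; exists S, k.
Qed.

End HomPlateau.

Theorem corollary2p3 (m n : nat) (C : rel 'I_m) (D : rel 'I_n) :
  refl_digraph_cycle C -> refl_digraph_cycle D -> non_contractible D ->
  forall phi : {ffun 'I_m -> 'I_n}, is_hom C D phi ->
  exists s : seq {ffun 'I_m -> 'I_n},
    up_path C D phi s /\ monotone (last phi s).
Proof.
move=> [_ _ C_edges C_local] [n_gt2 D_refl D_edges D_local] _ phi.
have [N] := ubnP #|nonstationary phi|.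
elim: N phi => // N IHN phi card_lt phi_hom.
have [mono|[[i phi_dec] [j phi_inc]]] :=
  monotone_or_slopes C_edges D_local phi_hom; first by exists [::].
have [S [k [plateau_phi entry]]] :=
  hom_plateau C_edges D_local phi_hom n_gt2 phi_dec phi_inc.
have card_raise := raise_nonstationary plateau_phi (ltnW n_gt2) entry.
have [s [path_s mono_s]] := IHN (raise S phi) (leq_trans card_raise card_lt)
  (raise_hom plateau_phi C_local D_refl phi_hom).
exists (raise S phi :: s); split => //; split => //.
exact: raise_up_edge plateau_phi C_local D_refl phi_hom (D_edges k).
Qed.
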